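(* Let $t>1$ and let $U:[-2\pi,2\pi]\to\mathbb{R}$ be given by \[ U(x)=\begin{cases}-\sin(\Psi_t^{-1}(x+2\pi)), & x<0,\\ -\sin(\Psi_t^{-1}(x)), & x\ge0.\end{cases} \] There exists $C=C(t)>0$ such that for any $\epsilon\in(0,\tfrac12]$ there exists a ReLU neural network $\Phi_\epsilon:\mathbb{R}\to\mathbb{R}$ with $\mathrm{depth}(\Phi_\epsilon)\le C\log(\epsilon^{-1})^2$, $\mathrm{width}(\Phi_\epsilon)\le C$ and $\|\Phi_\epsilon-U\|_{L^1([-2\pi,2\pi])}\le\epsilon$.
   Context: For $t>1$, let $x_t\in(0,\pi)$ be the unique positive solution of $x_t=t\sin(x_t)$ and $\Psi_t:[x_t,2\pi-x_t]\to[0,2\pi]$, $\Psi_t(x_0)=x_0-t\sin(x_0)$ (a bijection with inverse $\Psi_t^{-1}$). For a ReLU network, depth is the number of hidden layers and width the maximal number of neurons in a hidden layer. *)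

From Stdlib Require Import Reals List ClassicalEpsilon.
From Coquelicot Require Import Coquelicot.
Import ListNotations.
Open Scope R_scope.

Definition x_t (t : R) : R :=
  epsilon (inhabits 0) (fun x => 0 < x < PI /\ x = t * sin x).

Definition Psi (t x : R) : R := x - t * sin x.

Definition Psi_inv (t y : R) : R :=
  epsilon (inhabits 0)
    (fun x => x_t t <= x <= 2 * PI - x_t t /\ Psi t x = y).

Definition U (t x : R) : R :=
  if Rlt_dec x 0 then - sin (Psi_inv t (x + 2 * PI))
  else - sin (Psi_inv t x).

(* An affine layer: weight matrix as a list of rows, and a bias vector. *)
Definition affine : Type := (list (list R) * list R)%type.

Definition dot (u v : list R) : R :=
  fold_right Rplus 0 (map (fun p => fst p * snd p) (combine u v)).

Definition apply_aff (A : affine) (x : list R) : list R :=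
  map (fun p => dot (fst p) x + snd p) (combine (fst A) (snd A)).

Definition relu_vec (x : list R) : list R := map (fun z => Rmax 0 z) x.

Definition out_dim (A : affine) : nat := length (snd A).

Definition wf_aff (A : affine) (m n : nat) : Prop :=
  length (snd A) = n /\ length (fst A) = n /\ List.Forall (fun r => length r = m) (fst A).

(* Network = list of affine layers [A_1; ...; A_{L+1}], with ReLU applied
   after each of A_1..A_L; input dimension m, output dimension 1. *)
Fixpoint wf_net (m : nat) (net : list affine) : Prop :=
  match net with
  | [] => False
  | [A] => wf_aff A m 1
  | A :: rest => wf_aff A m (out_dim A) /\ wf_net (out_dim A) rest
  end.

Fixpoint eval_net (net : list affine) (x : list R) : list R :=
  match net with
  | [] => x
  | [A] => apply_aff A x
  | A :: rest => eval_net rest (relu_vec (apply_aff A x))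
  end.

Definition realize (net : list affine) (x : R) : R := hd 0 (eval_net net [x]).

(* depth = number of hidden layers *)
Definition depth (net : list affine) : nat := (length net - 1)%nat.

(* width = maximal number of neurons in a hidden layer *)
Definition width (net : list affine) : nat := list_max (map out_dim (removelast net)).

From Stdlib Require Import Reals List Lra Lia Classical ClassicalEpsilon ZArith.
From Coquelicot Require Import Coquelicot.
Import ListNotations.
Open Scope R_scope.

(* Psi_t is increasing on [x_t, 2 PI - x_t] with slope at least 1 - t cos x_t > 0, so
   Psi_t^{-1}(y) is found by bisection, n steps locating it within (PI - x_t) / 2^n; since
   U = - sin o Psi_t^{-1}, outputting - sin of the last midpoint costs no more than that.
   A ReLU network of constant width performs one bisection step with three layers by carrying
   the midpoint m only through (y - m, sin m, cos m): the test Psi_t m <= y is a ReLU ramp of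
   slope K, and sin and cos of m +- h follow from the addition formulas.  The ramp is exact
   except within 1 / K of the 2^(n+1) values Psi_t m (shifted by 2 PI on the left half),
   and hat functions covering these windows have total integral O(2^n / K).  Taking
   2^n ~ 1 / eps and K ~ 2^n / eps gives depth O(log (1 / eps)) and L^1 error eps. *)

(** * The map Psi_t *)

Lemma sin_ge_cubic a : 0 <= a <= PI -> a - a ^ 3 / 6 <= sin a.
Proof.
  intros [H0 Hpi]. destruct (sin_bound a 0 H0 Hpi) as [H _].
  unfold sin_approx, sin_term in H. simpl in H. lra.
Qed.

Lemma continuity_Psi t : continuity (Psi t).
Proof.
  apply continuity_minus; [apply derivable_continuous, derivable_id |].
  apply continuity_mult; [apply continuity_const; now intros ? ? | apply continuity_sin].
Qed.

Lemma derivable_pt_lim_Psi t x : derivable_pt_lim (Psi t) x (1 - t * cos x).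
Proof.
  apply derivable_pt_lim_minus; [apply derivable_pt_lim_id |].
  replace (t * cos x) with (0 * sin x + t * cos x) by ring.
  apply derivable_pt_lim_mult; [apply derivable_pt_lim_const | apply derivable_pt_lim_sin].
Qed.

Lemma x_cos_lt_sin x : 0 < x < PI -> x * cos x < sin x.
Proof.
  intros [H0 Hpi].
  destruct (MVT_cor2 (fun x => sin x - x * cos x) (fun x => x * sin x) 0 x H0)
    as [c [Hc Hcx]].
  { intros c _.
    replace (c * sin c) with (cos c - (1 * cos c + c * - sin c)) by ring.
    apply derivable_pt_lim_minus; [apply derivable_pt_lim_sin |].
    apply derivable_pt_lim_mult; [apply derivable_pt_lim_id | apply derivable_pt_lim_cos]. }
  rewrite sin_0, cos_0 in Hc.
  assert (0 < sin c) by (apply sin_gt_0; lra).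
  assert (0 < c * sin c * (x - 0)) by (repeat apply Rmult_lt_0_compat; lra).
  lra.
Qed.

Lemma cos_le_cos_boundary a x : 0 < a < PI -> a <= x <= 2 * PI - a -> cos x <= cos a.
Proof.
  intros Ha Hx. destruct (Rle_lt_dec x PI).
  - destruct (Req_dec x a) as [->|]; [lra |].
    left; apply cos_decreasing_1; lra.
  - replace (cos x) with (cos (2 * PI - x)) by (rewrite cos_minus, cos_2PI, sin_2PI; ring).
    destruct (Req_dec (2 * PI - x) a) as [->|]; [lra |].
    left; apply cos_decreasing_1; lra.
Qed.

(* For t > 1 the slope t of t sin at 0 exceeds 1, so x - t sin x changes sign on (0, PI]. *)
Lemma x_t_exists t : 1 < t -> exists x, 0 < x < PI /\ x = t * sin x.
Proof.
  intros ht. set (d := Rmin 1 (1 - / t)).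
  assert (0 < / t < 1) by (split; [apply Rinv_0_lt_compat | rewrite <- Rinv_1;
                                   apply Rinv_lt_contravar]; lra).
  assert (0 < d <= 1 /\ d <= 1 - / t)
    by (unfold d; repeat split; [apply Rmin_pos | apply Rmin_l | apply Rmin_r]; lra).
  assert (HPI : 3 < PI) by (generalize PI2_3_2; lra).
  assert (Hs := sin_ge_cubic d ltac:(lra)).
  assert (Hneg : Psi t d < 0).
  { unfold Psi. assert (t * d * (1 - / t) = t * d - d) by (field; lra).
    assert (d * d <= d * (1 - / t)) by nra.
    assert (t * (d - d ^ 3 / 6) <= t * sin d) by nra.
    assert (0 < t * (d * d) * (1 - d / 6)) by (repeat apply Rmult_lt_0_compat; nra).
    simpl in *. nra. }
  destruct (IVT_cor _ d PI (continuity_Psi t) ltac:(lra)) as [z [Hz Hz0]].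
  { unfold Psi in *. rewrite sin_PI. nra. }
  exists z. unfold Psi in Hz0.
  assert (z <> PI) by (intros ->; rewrite sin_PI in Hz0; lra).
  lra.
Qed.

Section Psi_map.

Variable t : R.
Hypothesis ht : 1 < t.

Lemma x_t_spec : 0 < x_t t < PI /\ x_t t = t * sin (x_t t).
Proof. unfold x_t. apply epsilon_spec, x_t_exists, ht. Qed.

Definition in_Psi_domain x := x_t t <= x <= 2 * PI - x_t t.

(* Lower bound of Psi' = 1 - t cos on the domain; it is attained at x_t. *)
Definition Psi_slope := 1 - t * cos (x_t t).

(* 1 - t cos x_t > 0 amounts to x_t cos x_t < sin x_t, using x_t = t sin x_t. *)
Lemma Psi_slope_pos : 0 < Psi_slope.
Proof.
  destruct x_t_spec as [Hx Heq]. unfold Psi_slope.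
  destruct (Rle_lt_dec (cos (x_t t)) 0); [nra |].
  assert (Hlt := x_cos_lt_sin _ Hx). rewrite Heq in Hlt at 1.
  assert (0 < sin (x_t t)) by (apply sin_gt_0; lra).
  nra.
Qed.

Lemma Psi_increase a b : in_Psi_domain a -> in_Psi_domain b -> a <= b ->
  Psi_slope * (b - a) <= Psi t b - Psi t a.
Proof.
  intros Ha Hb Hab. destruct (Req_dec a b) as [->|]; [lra |].
  destruct (MVT_cor2 (Psi t) (fun x => 1 - t * cos x) a b ltac:(lra)
    (fun c _ => derivable_pt_lim_Psi t c)) as [c [-> Hc]].
  assert (cos c <= cos (x_t t))
    by (apply cos_le_cos_boundary; [apply x_t_spec | unfold in_Psi_domain in *; lra]).
  unfold Psi_slope. apply Rmult_le_compat_r; nra.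
Qed.

Lemma Psi_lt a b : in_Psi_domain a -> in_Psi_domain b -> a < b -> Psi t a < Psi t b.
Proof.
  intros Ha Hb Hab. assert (Hinc := Psi_increase a b Ha Hb ltac:(lra)).
  assert (0 < Psi_slope * (b - a)) by (apply Rmult_lt_0_compat; [apply Psi_slope_pos | lra]).
  lra.
Qed.

Lemma Psi_inv_spec y : 0 <= y <= 2 * PI ->
  in_Psi_domain (Psi_inv t y) /\ Psi t (Psi_inv t y) = y.
Proof.
  intros Hy. unfold Psi_inv. apply epsilon_spec. destruct x_t_spec as [Hx Heq].
  destruct (IVT_cor (fun x => Psi t x - y) (x_t t) (2 * PI - x_t t)) as [z [Hz Hz0]].
  - apply continuity_minus; [apply continuity_Psi | apply continuity_const; now intros ? ?].
  - lra.
  - unfold Psi. rewrite sin_minus, cos_2PI, sin_2PI. nra.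
  - exists z. split; [exact Hz | lra].
Qed.

Lemma Psi_inv_lipschitz y1 y2 : 0 <= y1 <= 2 * PI -> 0 <= y2 <= 2 * PI ->
  Rabs (Psi_inv t y1 - Psi_inv t y2) <= Rabs (y1 - y2) / Psi_slope.
Proof.
  intros H1 H2. destruct (Psi_inv_spec y1 H1) as [D1 E1].
  destruct (Psi_inv_spec y2 H2) as [D2 E2]. assert (Hm := Psi_slope_pos).
  apply Rmult_le_reg_r with Psi_slope; [exact Hm |].
  unfold Rdiv. rewrite Rmult_assoc, Rinv_l, Rmult_1_r by lra.
  destruct (Rle_lt_dec (Psi_inv t y1) (Psi_inv t y2)).
  - assert (Hinc := Psi_increase _ _ D1 D2 r). rewrite E1, E2 in Hinc.
    rewrite !Rabs_left1; nra.
  - assert (Hinc := Psi_increase _ _ D2 D1 ltac:(lra)). rewrite E1, E2 in Hinc.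
    rewrite !Rabs_right; nra.
Qed.

(* Psi_inv is a junk value outside [0, 2 PI]; clamping makes it Lipschitz on the whole line. *)
Definition Psi_inv_clamped y := Psi_inv t (Rmax 0 (Rmin (2 * PI) y)).

Lemma continuity_pt_Psi_inv_clamped y : continuity_pt Psi_inv_clamped y.
Proof.
  assert (Hm := Psi_slope_pos). assert (HPI := PI_RGT_0).
  assert (Hclamp : forall z, 0 <= Rmax 0 (Rmin (2 * PI) z) <= 2 * PI)
    by (intros z; split; [apply Rmax_l | apply Rmax_lub; [lra | apply Rmin_l]]).
  assert (Hcontr : forall z, Rabs (Rmax 0 (Rmin (2 * PI) z) - Rmax 0 (Rmin (2 * PI) y))
                             <= Rabs (z - y))
    by (intros z; unfold Rmax, Rmin, Rabs; repeat (destruct Rle_dec || destruct Rcase_abs); lra).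
  intros eps Heps. exists (eps * Psi_slope). split; [apply Rmult_lt_0_compat; lra |].
  intros z [_ Hz]. simpl in *. unfold R_dist in *.
  eapply Rle_lt_trans; [apply Psi_inv_lipschitz; apply Hclamp |].
  apply Rmult_lt_reg_r with Psi_slope; [lra |].
  unfold Rdiv. rewrite Rmult_assoc, Rinv_l, Rmult_1_r by lra.
  eapply Rle_lt_trans; [apply Hcontr | exact Hz].
Qed.

End Psi_map.

(** * ReLU gadgets and the bisection step *)

Lemma Rmax0_idem z : Rmax 0 (Rmax 0 z) = Rmax 0 z.
Proof. apply Rmax_right, Rmax_l. Qed.

Lemma Rmax0_sub_opp z : Rmax 0 z - Rmax 0 (- z) = z.
Proof. unfold Rmax. destruct (Rle_dec 0 z), (Rle_dec 0 (- z)); lra. Qed.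

Definition soft_step (K z : R) : R :=
  Rmax 0 ((K * z + 1) / 2) - Rmax 0 ((K * z + 1) / 2 - 1).

Lemma soft_step_pos K z : 0 < K -> / K <= z -> soft_step K z = 1.
Proof.
  intros HK Hz. assert (1 <= K * z).
  { assert (K * / K = 1) by (field; lra). nra. }
  unfold soft_step. rewrite !Rmax_right by lra. ring.
Qed.

Lemma soft_step_neg K z : 0 < K -> z <= - / K -> soft_step K z = 0.
Proof.
  intros HK Hz. assert (K * z <= -1).
  { assert (K * / K = 1) by (field; lra). nra. }
  unfold soft_step. rewrite !Rmax_left by lra. ring.
Qed.

Definition gate (b c : R) : R := Rmax 0 (c - 1 + b) - Rmax 0 (- c - 1 + b).

Lemma gate_1 c : gate 1 c = c.
Proof.
  unfold gate. replace (c - 1 + 1) with c by ring. replace (- c - 1 + 1) with (- c) by ring.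
  apply Rmax0_sub_opp.
Qed.

Lemma gate_0 c : -1 <= c <= 1 -> gate 0 c = 0.
Proof.
  intros Hc. unfold gate. rewrite !Rmax_left by lra. ring.
Qed.

(* The state (d, s, c) stands for (y - m, sin m, cos m) with m the current midpoint, so that
   d + t s = y - Psi t m.  Its sign moves m to m +- h, and the addition formulas give
   sin and cos of the new midpoint, the sign being applied through [gate]. *)
Definition bisect_step (K t h : R) (st : R * R * R) : R * R * R :=
  let '(d, s, c) := st in
  let b := soft_step K (d + t * s) in
  (d - (2 * b - 1) * h,
   s * cos h + (2 * gate b c - c) * sin h,
   c * cos h - (2 * gate b s - s) * sin h).

Definition step_size (H : R) (j : nat) : R := H / 2 ^ S j.

Fixpoint iter_steps (K t H : R) (j n : nat) (st : R * R * R) : R * R * R :=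
  match n with
  | O => st
  | S n' => iter_steps K t H (S j) n' (bisect_step K t (step_size H j) st)
  end.

Definition start_state (K x : R) : R * R * R := (x - PI * (2 * soft_step K x - 1), 0, -1).

Definition readout (st : R * R * R) : R :=
  let '(_, s, _) := st in Rmax 0 (- s + 1) - Rmax 0 (- s - 1) - 1.

Lemma readout_bound st : Rabs (readout st) <= 1.
Proof.
  destruct st as [[d s] c]. apply Rabs_le. unfold readout, Rmax.
  repeat destruct Rle_dec; lra.
Qed.

Lemma readout_sin d m c : readout (d, sin m, c) = - sin m.
Proof.
  assert (Hs := SIN_bound m). unfold readout.
  rewrite Rmax_right, (Rmax_left 0 (- sin m - 1)) by lra. ring.
Qed.

(** * The network *)

(* Every hidden value is stored as its positive and negative part. *)
Definition signed_parts (st : R * R * R) : list R :=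
  let '(d, s, c) := st in
  [Rmax 0 d; Rmax 0 (- d); Rmax 0 s; Rmax 0 (- s); Rmax 0 c; Rmax 0 (- c)].

Definition input_layer (K : R) : affine :=
  ([[1]; [-1]; [K / 2]; [K / 2]], [0; 0; 1 / 2; - 1 / 2]).

Definition start_layer : affine :=
  ([[1; -1; -2 * PI; 2 * PI]; [-1; 1; 2 * PI; -2 * PI];
    [0; 0; 0; 0]; [0; 0; 0; 0]; [0; 0; 0; 0]; [0; 0; 0; 0]],
   [PI; - PI; 0; 0; -1; 1]).

Definition step_layer1 (K t : R) : affine :=
  ([[1; 0; 0; 0; 0; 0]; [0; 1; 0; 0; 0; 0]; [0; 0; 1; 0; 0; 0];
    [0; 0; 0; 1; 0; 0]; [0; 0; 0; 0; 1; 0]; [0; 0; 0; 0; 0; 1];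
    [K / 2; - K / 2; t * K / 2; - (t * K / 2); 0; 0];
    [K / 2; - K / 2; t * K / 2; - (t * K / 2); 0; 0]],
   [0; 0; 0; 0; 0; 0; 1 / 2; - 1 / 2]).

Definition step_layer2 : affine :=
  ([[1; 0; 0; 0; 0; 0; 0; 0]; [0; 1; 0; 0; 0; 0; 0; 0]; [0; 0; 1; 0; 0; 0; 0; 0];
    [0; 0; 0; 1; 0; 0; 0; 0]; [0; 0; 0; 0; 1; 0; 0; 0]; [0; 0; 0; 0; 0; 1; 0; 0];
    [0; 0; 0; 0; 0; 0; 1; 0]; [0; 0; 0; 0; 0; 0; 0; 1];
    [0; 0; 0; 0; 1; -1; 1; -1]; [0; 0; 0; 0; -1; 1; 1; -1];
    [0; 0; 1; -1; 0; 0; 1; -1]; [0; 0; -1; 1; 0; 0; 1; -1]],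
   [0; 0; 0; 0; 0; 0; 0; 0; -1; -1; -1; -1]).

Definition step_layer3 (h : R) : affine :=
  let ch := cos h in let sh := sin h in
  ([[1; -1; 0; 0; 0; 0; -2 * h; 2 * h; 0; 0; 0; 0];
    [-1; 1; 0; 0; 0; 0; 2 * h; -2 * h; 0; 0; 0; 0];
    [0; 0; ch; - ch; - sh; sh; 0; 0; 2 * sh; -2 * sh; 0; 0];
    [0; 0; - ch; ch; sh; - sh; 0; 0; -2 * sh; 2 * sh; 0; 0];
    [0; 0; sh; - sh; ch; - ch; 0; 0; 0; 0; -2 * sh; 2 * sh];
    [0; 0; - sh; sh; - ch; ch; 0; 0; 0; 0; 2 * sh; -2 * sh]],
   [h; - h; 0; 0; 0; 0]).

Definition readout_layer : affine := ([[0; 0; -1; 1; 0; 0]; [0; 0; -1; 1; 0; 0]], [1; -1]).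

Definition output_layer : affine := ([[1; -1]], [-1]).

Fixpoint step_blocks (K t H : R) (j n : nat) : list affine :=
  match n with
  | O => []
  | S n' => step_layer1 K t :: step_layer2 :: step_layer3 (step_size H j)
              :: step_blocks K t H (S j) n'
  end.

Definition bisection_net (K t H : R) (n : nat) : list affine :=
  input_layer K :: start_layer :: step_blocks K t H 0 n ++ [readout_layer; output_layer].

Lemma eval_net_cons A rest x : rest <> [] ->
  eval_net (A :: rest) x = eval_net rest (relu_vec (apply_aff A x)).
Proof. destruct rest; [contradiction | reflexivity]. Qed.

Ltac eval_layer :=
  unfold apply_aff, relu_vec, dot; simpl;
  repeat match goal with |- cons _ _ = cons _ _ => apply f_equal2 end;
  try reflexivity; try (apply f_equal; field); try ring.

Lemma eval_input_layer K x : relu_vec (apply_aff (input_layer K) [x]) =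
  [Rmax 0 x; Rmax 0 (- x); Rmax 0 ((K * x + 1) / 2); Rmax 0 ((K * x + 1) / 2 - 1)].
Proof. eval_layer. Qed.

Lemma eval_start_layer a1 a2 a3 a4 : relu_vec (apply_aff start_layer [a1; a2; a3; a4]) =
  signed_parts ((a1 - a2) - PI * (2 * (a3 - a4) - 1), 0, -1).
Proof. eval_layer. Qed.

Lemma eval_step_layer1 K t a1 a2 a3 a4 a5 a6 :
  relu_vec (apply_aff (step_layer1 K t) [a1; a2; a3; a4; a5; a6]) =
  [Rmax 0 a1; Rmax 0 a2; Rmax 0 a3; Rmax 0 a4; Rmax 0 a5; Rmax 0 a6;
   Rmax 0 ((K * ((a1 - a2) + t * (a3 - a4)) + 1) / 2);
   Rmax 0 ((K * ((a1 - a2) + t * (a3 - a4)) + 1) / 2 - 1)].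
Proof. eval_layer. Qed.

Lemma eval_step_layer2 b1 b2 b3 b4 b5 b6 b7 b8 :
  relu_vec (apply_aff step_layer2 [b1; b2; b3; b4; b5; b6; b7; b8]) =
  [Rmax 0 b1; Rmax 0 b2; Rmax 0 b3; Rmax 0 b4; Rmax 0 b5; Rmax 0 b6; Rmax 0 b7; Rmax 0 b8;
   Rmax 0 ((b5 - b6) - 1 + (b7 - b8)); Rmax 0 (- (b5 - b6) - 1 + (b7 - b8));
   Rmax 0 ((b3 - b4) - 1 + (b7 - b8)); Rmax 0 (- (b3 - b4) - 1 + (b7 - b8))].
Proof. eval_layer. Qed.

Lemma eval_step_layer3 h e1 e2 e3 e4 e5 e6 e7 e8 e9 e10 e11 e12 :
  relu_vec (apply_aff (step_layer3 h) [e1; e2; e3; e4; e5; e6; e7; e8; e9; e10; e11; e12]) =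
  signed_parts ((e1 - e2) - (2 * (e7 - e8) - 1) * h,
                (e3 - e4) * cos h + (2 * (e9 - e10) - (e5 - e6)) * sin h,
                (e5 - e6) * cos h - (2 * (e11 - e12) - (e3 - e4)) * sin h).
Proof. eval_layer. Qed.

Lemma eval_readout_layer a1 a2 a3 a4 a5 a6 :
  relu_vec (apply_aff readout_layer [a1; a2; a3; a4; a5; a6]) =
  [Rmax 0 (- (a3 - a4) + 1); Rmax 0 (- (a3 - a4) - 1)].
Proof. eval_layer. Qed.

Lemma eval_output_layer a b : apply_aff output_layer [a; b] = [a - b - 1].
Proof. eval_layer. Qed.

Lemma eval_step_block K t h st :
  relu_vec (apply_aff (step_layer3 h) (relu_vec (apply_aff step_layer2
    (relu_vec (apply_aff (step_layer1 K t) (signed_parts st))))))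
  = signed_parts (bisect_step K t h st).
Proof.
  destruct st as [[d s] c]. unfold signed_parts at 1.
  rewrite eval_step_layer1, eval_step_layer2, eval_step_layer3, !Rmax0_idem, !Rmax0_sub_opp.
  reflexivity.
Qed.

Lemma eval_step_blocks K t H n : forall j st rest, rest <> [] ->
  eval_net (step_blocks K t H j n ++ rest) (signed_parts st)
  = eval_net rest (signed_parts (iter_steps K t H j n st)).
Proof.
  induction n as [|n IH]; intros j st rest Hrest; [reflexivity |].
  cbn [step_blocks iter_steps app].
  assert (step_blocks K t H (S j) n ++ rest <> [])
    by (destruct (step_blocks K t H (S j) n); [exact Hrest | discriminate]).
  rewrite !eval_net_cons by (assumption || discriminate).
  rewrite eval_step_block. apply IH, Hrest.
Qed.

Lemma realize_bisection_net K t H n x :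
  realize (bisection_net K t H n) x = readout (iter_steps K t H 0 n (start_state K x)).
Proof.
  unfold realize, bisection_net.
  rewrite eval_net_cons by discriminate.
  rewrite eval_net_cons by (destruct n; discriminate).
  rewrite eval_input_layer, eval_start_layer, !Rmax0_sub_opp.
  change (signed_parts _) with (signed_parts (start_state K x)).
  rewrite eval_step_blocks by discriminate.
  destruct (iter_steps K t H 0 n (start_state K x)) as [[d s] c].
  cbn [signed_parts eval_net].
  rewrite eval_readout_layer, eval_output_layer, !Rmax0_sub_opp. reflexivity.
Qed.

Lemma wf_net_cons m A rest : rest <> [] ->
  wf_aff A m (out_dim A) -> wf_net (out_dim A) rest -> wf_net m (A :: rest).
Proof. destruct rest; [contradiction | now split]. Qed.

Ltac wf_layer := split; [reflexivity | split; [reflexivity | repeat constructor]].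

Lemma wf_step_blocks K t H n :
  forall j, wf_net 6 (step_blocks K t H j n ++ [readout_layer; output_layer]).
Proof.
  induction n as [|n IH]; intros j; cbn [step_blocks app].
  - split; wf_layer.
  - apply wf_net_cons; [discriminate | wf_layer |].
    apply wf_net_cons; [discriminate | wf_layer |].
    apply wf_net_cons; [destruct n; discriminate | wf_layer | apply IH].
Qed.

Lemma wf_bisection_net K t H n : wf_net 1 (bisection_net K t H n).
Proof.
  apply wf_net_cons; [discriminate | wf_layer |].
  apply wf_net_cons; [destruct n; discriminate | wf_layer | apply wf_step_blocks].
Qed.

Lemma depth_bisection_net K t H n : depth (bisection_net K t H n) = (3 * n + 3)%nat.
Proof.
  assert (Hlen : forall j, length (step_blocks K t H j n) = (3 * n)%nat).
  { induction n as [|n IH]; intros j; simpl; [reflexivity | rewrite IH; lia]. }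
  unfold depth, bisection_net. simpl. rewrite length_app, Hlen. simpl. lia.
Qed.

Lemma width_bisection_net K t H n : (width (bisection_net K t H n) <= 12)%nat.
Proof.
  unfold width, bisection_net.
  change [readout_layer; output_layer] with ([readout_layer] ++ [output_layer]).
  rewrite app_assoc, app_comm_cons, app_comm_cons, removelast_last.
  apply list_max_le, List.Forall_map.
  assert (Hblocks : forall j, List.Forall (fun A => (out_dim A <= 12)%nat) (step_blocks K t H j n)).
  { induction n as [|n IH]; intros j; simpl; repeat constructor; apply IH. }
  repeat constructor. apply List.Forall_app. split; [apply Hblocks | repeat constructor].
Qed.

(** * Continuity *)

Lemma continuity_pt_Rmax0 f x : continuity_pt f x -> continuity_pt (fun y => Rmax 0 (f y)) x.
Proof.
  intros Hf. apply continuity_pt_ext with (fun y => (f y + Rabs (f y)) * / 2).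
  { intros y. unfold Rmax, Rabs. destruct Rle_dec, Rcase_abs; lra. }
  apply continuity_pt_mult with (f2 := fun _ => / 2); [| apply continuity_pt_const; now intros ? ?].
  apply continuity_pt_plus with (f2 := fun y => Rabs (f y)); [exact Hf |].
  apply (continuity_pt_comp f Rabs); [exact Hf | apply Rcontinuity_abs].
Qed.

Definition components_continuous (F : R -> list R) : Prop :=
  forall i x, continuity_pt (fun y => nth i (F y) 0) x.

Lemma dot_cons a u v : dot (a :: u) v = a * nth 0 v 0 + dot u (tl v).
Proof. destruct v; unfold dot; simpl; [destruct u |]; simpl; ring. Qed.

Lemma continuity_pt_dot u : forall F x, components_continuous F ->
  continuity_pt (fun y => dot u (F y)) x.
Proof.
  induction u as [|a u IH]; intros F x HF.
  - apply continuity_pt_const. now intros ? ?.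
  - apply continuity_pt_ext with (fun y => a * nth 0 (F y) 0 + dot u (tl (F y))).
    { intros y. symmetry. apply dot_cons. }
    apply continuity_pt_plus with (f2 := fun y => dot u (tl (F y))).
    + apply continuity_pt_scal with (f := fun y => nth 0 (F y) 0), HF.
    + apply IH. intros i z. apply continuity_pt_ext with (fun y => nth (S i) (F y) 0).
      { intros y. destruct (F y); [destruct i |]; reflexivity. }
      apply HF.
Qed.

Lemma nth_apply_aff A v i : nth i (apply_aff A v) 0 =
  match nth_error (combine (fst A) (snd A)) i with
  | Some p => dot (fst p) v + snd p
  | None => 0
  end.
Proof.
  unfold apply_aff. generalize (combine (fst A) (snd A)).
  induction i as [|i IH]; intros l; destruct l; simpl; auto.
Qed.

Lemma components_continuous_apply_aff A F : components_continuous F ->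
  components_continuous (fun y => apply_aff A (F y)).
Proof.
  intros HF i x. apply continuity_pt_ext
    with (fun y => match nth_error (combine (fst A) (snd A)) i with
                   | Some p => dot (fst p) (F y) + snd p | None => 0 end).
  { intros y. symmetry. apply nth_apply_aff. }
  destruct nth_error as [p|].
  - apply continuity_pt_plus with (f2 := fun _ => snd p); [apply continuity_pt_dot, HF |].
    apply continuity_pt_const. now intros ? ?.
  - apply continuity_pt_const. now intros ? ?.
Qed.

Lemma components_continuous_relu_vec F : components_continuous F ->
  components_continuous (fun y => relu_vec (F y)).
Proof.
  intros HF i x. apply continuity_pt_ext with (fun y => Rmax 0 (nth i (F y) 0)).
  { intros y. unfold relu_vec. rewrite <- (map_nth (fun z => Rmax 0 z)).
    f_equal. apply Rmax_left, Rle_refl. }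
  apply continuity_pt_Rmax0, HF.
Qed.

Lemma components_continuous_eval_net net : forall F, components_continuous F ->
  components_continuous (fun y => eval_net net (F y)).
Proof.
  induction net as [|A [|B rest] IH]; intros F HF.
  - exact HF.
  - apply components_continuous_apply_aff, HF.
  - apply (IH (fun y => relu_vec (apply_aff A (F y)))).
    apply components_continuous_relu_vec, components_continuous_apply_aff, HF.
Qed.

Lemma continuity_pt_realize net x : continuity_pt (realize net) x.
Proof.
  apply continuity_pt_ext with (fun y => nth 0 (eval_net net [y]) 0).
  { intros y. unfold realize. now destruct (eval_net net [y]). }
  refine (components_continuous_eval_net net (fun y => [y]) _ 0%nat x).
  intros [|i] z; simpl.
  - apply derivable_continuous_pt, derivable_pt_id.
  - destruct i; apply continuity_pt_const; now intros ? ?.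
Qed.

(** * Integrals of hat functions *)

Lemma ex_RInt_continuity_pt f a b : (forall x, continuity_pt f x) -> ex_RInt f a b.
Proof.
  intros Hf. apply (@ex_RInt_continuous R_CompleteNormedModule).
  intros z _. apply continuity_pt_filterlim, Hf.
Qed.

Lemma RInt_le_support f a b p q M : a <= b -> p <= q ->
  (forall x, continuity_pt f x) -> (forall x, 0 <= f x <= M) ->
  (forall x, x < p \/ q < x -> f x = 0) ->
  RInt f a b <= (q - p) * M.
Proof.
  intros Hab Hpq Hf Hbound Hsupp.
  set (A := Rmin a p). set (B := Rmax b q).
  assert (A <= a /\ A <= p) by (split; [apply Rmin_l | apply Rmin_r]).
  assert (b <= B /\ q <= B) by (split; [apply Rmax_l | apply Rmax_r]).
  assert (Hex : forall u v, ex_RInt f u v) by (intros; apply ex_RInt_continuity_pt, Hf).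
  assert (Hchasles : forall u v w, RInt f u v + RInt f v w = RInt f u w)
    by (intros u v w; exact (RInt_Chasles f u v w (Hex u v) (Hex v w))).
  assert (Hzero : forall u v, u <= v -> (forall x, u < x < v -> x < p \/ q < x) -> RInt f u v = 0).
  { intros u v Huv Hout. rewrite (RInt_ext _ (fun _ => 0)), RInt_const.
    - apply (Rmult_0_r (v - u)).
    - intros x Hx. rewrite Rmin_left, Rmax_right in Hx by exact Huv. apply Hsupp, Hout, Hx. }
  assert (Hmid : RInt f p q <= (q - p) * M).
  { eapply Rle_trans; [apply Rle_abs |]. apply abs_RInt_le_const; [exact Hpq | apply Hex |].
    intros x _. rewrite Rabs_right by (apply Rle_ge, Hbound). apply Hbound. }
  assert (0 <= RInt f A a /\ 0 <= RInt f b B)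
    by (split; apply RInt_ge_0; (lra || apply Hex || intros; apply Hbound)).
  assert (RInt f A p = 0 /\ RInt f q B = 0)
    by (split; apply Hzero; (lra || intros; lra)).
  assert (Ha := Hchasles A a b). assert (Hb := Hchasles A b B).
  assert (Hp := Hchasles A p q). assert (Hq := Hchasles A q B).
  lra.
Qed.

Section Hats.

Variable K : R.
Hypothesis hK : 0 < K.

(* At least 1 where a ramp with breakpoint P may be inexact, with integral 4 / K. *)
Definition hat (P x : R) : R := Rmax 0 (2 - K * Rabs (x - P)).

Definition hat_sum (l : list R) (x : R) : R := fold_right (fun P acc => hat P x + acc) 0 l.

Lemma hat_nonneg P x : 0 <= hat P x.
Proof. apply Rmax_l. Qed.

Lemma hat_sum_nonneg l x : 0 <= hat_sum l x.
Proof. induction l as [|P l IH]; simpl; [lra | assert (Hh := hat_nonneg P x); lra]. Qed.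

Lemma hat_le_hat_sum l P x : In P l -> hat P x <= hat_sum l x.
Proof.
  induction l as [|Q l IH]; simpl; [tauto |].
  assert (HQ := hat_nonneg Q x). assert (Hl := hat_sum_nonneg l x).
  intros [->|HP]; [| specialize (IH HP)]; lra.
Qed.

Lemma hat_ge_1 P x : Rabs (x - P) < / K -> 1 <= hat P x.
Proof.
  intros Hx. unfold hat. eapply Rle_trans; [| apply Rmax_r].
  assert (K * Rabs (x - P) < K * / K) by (apply Rmult_lt_compat_l; lra).
  rewrite Rinv_r in * by lra. lra.
Qed.

Lemma continuity_pt_hat P x : continuity_pt (hat P) x.
Proof.
  apply continuity_pt_Rmax0 with (f := fun y => 2 - K * Rabs (y - P)).
  apply continuity_pt_minus with (f1 := fun _ => 2);
    [apply continuity_pt_const; now intros ? ? |].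
  apply continuity_pt_scal with (f := fun y => Rabs (y - P)).
  apply (continuity_pt_comp (fun y => y - P) Rabs); [| apply Rcontinuity_abs].
  apply continuity_pt_minus with (f2 := fun _ => P);
    [apply derivable_continuous_pt, derivable_pt_id | apply continuity_pt_const; now intros ? ?].
Qed.

Lemma continuity_pt_hat_sum l x : continuity_pt (hat_sum l) x.
Proof.
  induction l as [|P l IH]; simpl.
  - apply continuity_pt_const. now intros ? ?.
  - apply continuity_pt_plus with (f1 := hat P) (f2 := hat_sum l);
      [apply continuity_pt_hat | exact IH].
Qed.

Lemma RInt_hat_le a b P : a <= b -> RInt (hat P) a b <= 8 / K.
Proof.
  intros Hab.
  replace (8 / K) with ((P + 2 / K - (P - 2 / K)) * 2) by (field; lra).
  apply RInt_le_support; [exact Hab | assert (0 < 2 / K) by (apply Rdiv_lt_0_compat; lra); lra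
                         | apply continuity_pt_hat | |].
  - intros x. split; [apply hat_nonneg |]. unfold hat. apply Rmax_lub; [lra |].
    assert (0 <= K * Rabs (x - P)) by (apply Rmult_le_pos; [lra | apply Rabs_pos]). lra.
  - intros x Hx. unfold hat. apply Rmax_left.
    assert (2 / K < Rabs (x - P)) by (unfold Rabs; destruct Rcase_abs; lra).
    assert (K * (2 / K) < K * Rabs (x - P)) by (apply Rmult_lt_compat_l; lra).
    replace (K * (2 / K)) with 2 in * by (field; lra). lra.
Qed.

Lemma RInt_hat_sum_le a b l : a <= b -> RInt (hat_sum l) a b <= INR (length l) * (8 / K).
Proof.
  intros Hab. induction l as [|P l IH].
  - simpl. rewrite (RInt_ext _ (fun _ => 0)) by reflexivity.
    rewrite RInt_const, Rmult_0_l. apply Req_le, (Rmult_0_r (b - a)).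
  - change (RInt (fun x => hat P x + hat_sum l x) a b <= INR (length (P :: l)) * (8 / K)).
    rewrite (RInt_plus (hat P) (hat_sum l)) by (apply ex_RInt_continuity_pt;
      (apply continuity_pt_hat || apply continuity_pt_hat_sum)).
    rewrite length_cons, S_INR. assert (Hh := RInt_hat_le a b P Hab).
    change plus with Rplus. lra.
Qed.

End Hats.

(** * Bisection *)

Lemma sin_lipschitz a b : Rabs (sin a - sin b) <= Rabs (a - b).
Proof.
  rewrite <- (Rmult_1_l (Rabs (a - b))).
  apply (bounded_variation sin cos). intros c _.
  split; [apply is_derive_sin | apply Rabs_le, COS_bound].
Qed.

Section Bisection.

Variables t K : R.
Hypotheses (ht : 1 < t) (hK : 0 < K).

Definition half_width := PI - x_t t.

Lemma half_width_pos : 0 < half_width.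
Proof. unfold half_width. destruct (x_t_spec t ht). lra. Qed.

Fixpoint midpoint (y : R) (j : nat) : R :=
  match j with
  | O => PI
  | S j' => let m := midpoint y j' in
            if Rle_dec (Psi t m) y then m + step_size half_width j'
            else m - step_size half_width j'
  end.

Lemma midpoint_spec y : 0 <= y <= 2 * PI -> forall j,
  x_t t <= midpoint y j - half_width / 2 ^ j /\
  midpoint y j + half_width / 2 ^ j <= 2 * PI - x_t t /\
  Rabs (Psi_inv t y - midpoint y j) <= half_width / 2 ^ j.
Proof.
  intros Hy. destruct (Psi_inv_spec t ht y Hy) as [Hdom HPsi].
  set (E := Psi_inv t y) in *.
  induction j as [|j IH]; simpl midpoint.
  - rewrite pow_O, Rdiv_1_r. unfold half_width, in_Psi_domain in *.
    rewrite Rabs_le_between. lra.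
  - destruct IH as [Hlo [Hhi Herr]]. set (m := midpoint y j) in *.
    set (r := half_width / 2 ^ j) in *.
    assert (0 < r) by (apply Rdiv_lt_0_compat; [apply half_width_pos | apply pow_lt; lra]).
    replace (half_width / 2 ^ S j) with (r / 2)
      by (unfold r; simpl; field; apply pow_nonzero; lra).
    replace (step_size half_width j) with (r / 2)
      by (unfold step_size, r; simpl; field; apply pow_nonzero; lra).
    assert (Hm : in_Psi_domain t m) by (unfold in_Psi_domain; lra).
    rewrite Rabs_le_between in Herr |- *.
    destruct (Rle_dec (Psi t m) y) as [Hle|Hgt].
    + assert (m <= E).
      { destruct (Rle_lt_dec m E) as [|Hlt]; [assumption |].
        assert (Psi t E < Psi t m) by (apply (Psi_lt t ht); assumption). lra. }
      lra.
    + assert (E < m).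
      { destruct (Rlt_le_dec E m) as [|Hge]; [assumption |].
        destruct (Req_dec E m) as [<-|]; [lra |].
        assert (Psi t m < Psi t E) by (apply (Psi_lt t ht); [| | lra]; assumption). lra. }
      lra.
Qed.

Definition midpoint_state (y : R) (j : nat) : R * R * R :=
  (y - midpoint y j, sin (midpoint y j), cos (midpoint y j)).

Lemma bisect_step_midpoint y j : / K <= Rabs (y - Psi t (midpoint y j)) ->
  bisect_step K t (step_size half_width j) (midpoint_state y j) = midpoint_state y (S j).
Proof.
  unfold midpoint_state. simpl midpoint. set (m := midpoint y j). set (h := step_size half_width j).
  intros Hfar. unfold bisect_step.
  replace (y - m + t * sin m) with (y - Psi t m) by (unfold Psi; ring).
  assert (0 < / K) by (apply Rinv_0_lt_compat, hK).
  assert (Hs := SIN_bound m). assert (Hc := COS_bound m).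
  destruct (Rle_dec (Psi t m) y) as [Hle|Hgt].
  - rewrite soft_step_pos, !gate_1 by (rewrite Rabs_right in Hfar; lra).
    rewrite sin_plus, cos_plus. f_equal; [f_equal |]; ring.
  - rewrite soft_step_neg, !gate_0 by (rewrite ?Rabs_left in Hfar; lra).
    rewrite sin_minus, cos_minus. f_equal; [f_equal |]; ring.
Qed.

Lemma iter_steps_midpoint y n : forall j,
  (forall i, (j <= i < j + n)%nat -> / K <= Rabs (y - Psi t (midpoint y i))) ->
  iter_steps K t half_width j n (midpoint_state y j) = midpoint_state y (j + n).
Proof.
  induction n as [|n IH]; intros j Hfar; cbn [iter_steps].
  - now rewrite Nat.add_0_r.
  - rewrite bisect_step_midpoint, IH, Nat.add_succ_r by (intros; apply Hfar; lia).
    reflexivity.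
Qed.

(* The left half [-2 PI, 0) of the domain of U is the translate of [0, 2 PI). *)
Definition wrap (x : R) : R := if Rlt_dec x 0 then x + 2 * PI else x.

Lemma U_wrap x : U t x = - sin (Psi_inv t (wrap x)).
Proof. unfold U, wrap. now destruct Rlt_dec. Qed.

Lemma start_state_wrap x : / K <= Rabs x -> start_state K x = midpoint_state (wrap x) 0.
Proof.
  intros Hfar. unfold start_state, midpoint_state, wrap. simpl midpoint.
  rewrite sin_PI, cos_PI.
  assert (0 < / K) by (apply Rinv_0_lt_compat, hK).
  destruct Rlt_dec.
  - rewrite Rabs_left in Hfar by lra. rewrite soft_step_neg by (auto; lra).
    f_equal; f_equal; ring.
  - rewrite Rabs_right in Hfar by lra. rewrite soft_step_pos by (auto; lra).
    f_equal; f_equal; ring.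
Qed.

Fixpoint midpoints (j : nat) : list R :=
  match j with
  | O => [PI]
  | S j' => flat_map (fun m => [m + step_size half_width j'; m - step_size half_width j'])
                     (midpoints j')
  end.

Lemma midpoint_in_midpoints y j : In (midpoint y j) (midpoints j).
Proof.
  induction j as [|j IH]; simpl; [now left |].
  apply in_flat_map. exists (midpoint y j). split; [exact IH |].
  destruct Rle_dec; simpl; auto.
Qed.

(* The points near which some ReLU step of the network may be inexact. *)
Definition breakpoints (n : nat) : list R :=
  0 :: flat_map (fun j => flat_map (fun m => [Psi t m; Psi t m - 2 * PI]) (midpoints j))
                (seq 0 n).

Lemma length_flat_map_pair (f g : R -> R) l :
  length (flat_map (fun m => [f m; g m]) l) = (2 * length l)%nat.
Proof. induction l as [|a l IH]; simpl; [reflexivity | rewrite IH; lia]. Qed.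

Lemma length_breakpoints n : (length (breakpoints n) + 1 = 2 ^ S n)%nat.
Proof.
  assert (Hmid : forall j, length (midpoints j) = (2 ^ j)%nat).
  { induction j as [|j IH]; simpl; [reflexivity |].
    rewrite length_flat_map_pair, IH. lia. }
  unfold breakpoints. cbn [length].
  induction n as [|n IH]; [reflexivity |].
  rewrite seq_S, flat_map_app, length_app. simpl (flat_map _ [_]).
  rewrite app_nil_r, length_flat_map_pair, Hmid. simpl in *. lia.
Qed.

Lemma realize_exact_or_near n x :
  realize (bisection_net K t half_width n) x = - sin (midpoint (wrap x) n) \/
  exists P, In P (breakpoints n) /\ Rabs (x - P) < / K.
Proof.
  destruct (Rlt_le_dec (Rabs x) (/ K)) as [Hnear|Hfar0].
  { right. exists 0. split; [now left | now rewrite Rminus_0_r]. }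
  set (y := wrap x).
  destruct (classic (forall i, (0 <= i < 0 + n)%nat -> / K <= Rabs (y - Psi t (midpoint y i))))
    as [Hfar|Hnear].
  - left. rewrite realize_bisection_net, start_state_wrap, iter_steps_midpoint by assumption.
    apply readout_sin.
  - right. apply not_all_ex_not in Hnear as [i Hi].
    apply imply_to_and in Hi as [Hi Hnear]. apply Rnot_le_lt in Hnear.
    exists (if Rlt_dec x 0 then Psi t (midpoint y i) - 2 * PI else Psi t (midpoint y i)).
    split.
    + right. apply in_flat_map. exists i. split; [apply in_seq; lia |].
      apply in_flat_map. exists (midpoint y i). split; [apply midpoint_in_midpoints |].
      destruct Rlt_dec; simpl; auto.
    + replace (x - _) with (y - Psi t (midpoint y i)) by (unfold y, wrap; destruct Rlt_dec; ring).
      exact Hnear.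
Qed.

Lemma bisection_error_pointwise n x : - 2 * PI <= x <= 2 * PI ->
  Rabs (realize (bisection_net K t half_width n) x - U t x)
  <= half_width / 2 ^ n + 2 * hat_sum K (breakpoints n) x.
Proof.
  intros Hx.
  assert (0 < half_width / 2 ^ n)
    by (apply Rdiv_lt_0_compat; [apply half_width_pos | apply pow_lt; lra]).
  assert (Hsum := hat_sum_nonneg K (breakpoints n) x).
  rewrite U_wrap.
  destruct (realize_exact_or_near n x) as [-> | [P [HP Hnear]]].
  - assert (Hy : 0 <= wrap x <= 2 * PI) by (unfold wrap; destruct Rlt_dec; lra).
    destruct (midpoint_spec (wrap x) Hy n) as [_ [_ Herr]].
    replace (_ - _) with (sin (Psi_inv t (wrap x)) - sin (midpoint (wrap x) n)) by ring.
    assert (Hlip := sin_lipschitz (Psi_inv t (wrap x)) (midpoint (wrap x) n)). lra.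
  - assert (1 <= hat_sum K (breakpoints n) x)
      by (eapply Rle_trans; [apply (hat_ge_1 K hK P x Hnear) | apply hat_le_hat_sum, HP]).
    eapply Rle_trans; [apply Rabs_triang |]. rewrite !Rabs_Ropp, realize_bisection_net.
    assert (Hout := readout_bound (iter_steps K t half_width 0 n (start_state K x))).
    assert (Rabs (sin (Psi_inv t (wrap x))) <= 1)
      by (apply Rabs_le_between, SIN_bound).
    lra.
Qed.

End Bisection.

(** * The L^1 error *)

Section Error.

Variables t K : R.
Hypotheses (ht : 1 < t) (hK : 0 < K).

Lemma ex_RInt_bisection_error n :
  ex_RInt (fun x => Rabs (realize (bisection_net K t (half_width t) n) x - U t x))
    (- 2 * PI) (2 * PI).
Proof.
  assert (HPI := PI_RGT_0).
  assert (Hcont : forall s, ex_RInt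
    (fun x => Rabs (realize (bisection_net K t (half_width t) n) x
                    + sin (Psi_inv_clamped t (x + s))))
    (- 2 * PI) (2 * PI)).
  { intros s. apply ex_RInt_continuity_pt. intros x.
    apply (continuity_pt_comp _ Rabs); [| apply Rcontinuity_abs].
    apply continuity_pt_plus with (f2 := fun y => sin (Psi_inv_clamped t (y + s)));
      [apply continuity_pt_realize |].
    apply (continuity_pt_comp (fun y => Psi_inv_clamped t (y + s)) sin); [| apply continuity_sin].
    apply (continuity_pt_comp (fun y => y + s)); [| apply continuity_pt_Psi_inv_clamped, ht].
    apply continuity_pt_plus with (f2 := fun _ => s);
      [apply derivable_continuous_pt, derivable_pt_id |
       apply continuity_pt_const; now intros ? ?]. }
  apply ex_RInt_Chasles with 0.
  - eapply ex_RInt_ext;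
      [| apply (@ex_RInt_Chasles_1 R_CompleteNormedModule _ _ _ (2 * PI));
         [lra | apply (Hcont (2 * PI))]].
    intros x Hx. rewrite Rmin_left, Rmax_right in Hx by lra.
    unfold U, Psi_inv_clamped. destruct Rlt_dec; [| lra].
    rewrite Rmin_right, Rmax_right by lra. f_equal. ring.
  - eapply ex_RInt_ext;
      [| apply (@ex_RInt_Chasles_2 R_CompleteNormedModule _ (- 2 * PI)); [lra | apply (Hcont 0)]].
    intros x Hx. rewrite Rmin_left, Rmax_right in Hx by lra.
    unfold U, Psi_inv_clamped. destruct Rlt_dec; [lra |].
    rewrite Rplus_0_r, Rmin_right, Rmax_right by lra. f_equal. ring.
Qed.

Lemma RInt_bisection_error_le n :
  RInt (fun x => Rabs (realize (bisection_net K t (half_width t) n) x - U t x)) (- 2 * PI) (2 * PI)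
  <= 4 * PI * (half_width t / 2 ^ n) + 2 ^ S n * (16 / K).
Proof.
  assert (HPI := PI_RGT_0).
  set (pts := breakpoints t n). set (c := half_width t / 2 ^ n).
  assert (Hex : ex_RInt (hat_sum K pts) (- 2 * PI) (2 * PI))
    by (apply ex_RInt_continuity_pt, continuity_pt_hat_sum).
  assert (Hex2 : ex_RInt (fun x => 2 * hat_sum K pts x) (- 2 * PI) (2 * PI))
    by (apply (ex_RInt_scal (hat_sum K pts)), Hex).
  eapply Rle_trans.
  { apply (RInt_le _ (fun x => c + 2 * hat_sum K pts x)).
    - lra.
    - apply ex_RInt_bisection_error.
    - apply (ex_RInt_plus (fun _ => c) (fun x => 2 * hat_sum K pts x));
        [apply ex_RInt_const | exact Hex2].
    - intros x Hx. apply (bisection_error_pointwise t K ht hK). lra. }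
  rewrite (RInt_plus (fun _ => c) (fun x => 2 * hat_sum K pts x))
    by (apply ex_RInt_const || exact Hex2).
  rewrite RInt_const, (RInt_scal (hat_sum K pts)) by exact Hex.
  assert (Hsum := RInt_hat_sum_le K hK (- 2 * PI) (2 * PI) pts ltac:(lra)).
  assert (Hlen : INR (length pts) <= 2 ^ S n).
  { rewrite <- (Rmult_1_l (2 ^ S n)). replace 2 with (INR 2) by reflexivity.
    rewrite <- pow_INR, <- (length_breakpoints t n), plus_INR. simpl. lra. }
  assert (0 < 8 / K) by (apply Rdiv_lt_0_compat; lra).
  assert (INR (length pts) * (8 / K) <= 2 ^ S n * (8 / K)) by (apply Rmult_le_compat_r; lra).
  replace (2 ^ S n * (16 / K)) with (2 * (2 ^ S n * (8 / K))) by (field; lra).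
  change plus with Rplus. change scal with Rmult. lra.
Qed.

End Error.

(** * Choice of the parameters *)

Lemma ln_inv_ge_ln2 eps : 0 < eps <= 1 / 2 -> ln 2 <= ln (/ eps).
Proof.
  intros He. apply ln_le; [lra |].
  rewrite <- (Rinv_inv 2). apply Rinv_le_contravar; lra.
Qed.

Lemma pow2_ge_inv eps : 0 < eps <= 1 / 2 ->
  exists N : nat, / eps <= 2 ^ N /\ INR N <= 2 * ln (/ eps) + 1.
Proof.
  intros He. set (L := ln (/ eps)). assert (Hln2 := ln_lt_2).
  assert (HL : ln 2 <= L) by apply (ln_inv_ge_ln2 eps He).
  set (z := L / ln 2).
  assert (Hz : z <= 2 * L).
  { apply Rmult_le_reg_r with (ln 2); [lra |].
    unfold z, Rdiv. rewrite Rmult_assoc, Rinv_l by lra. nra. }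
  destruct (archimed z) as [Hup1 Hup2].
  assert (Hpos : (0 < up z)%Z) by (apply lt_0_IZR; apply Rlt_trans with z;
                                    [unfold z; apply Rdiv_lt_0_compat |]; lra).
  exists (Z.to_nat (up z)).
  assert (HN : INR (Z.to_nat (up z)) = IZR (up z))
    by (rewrite INR_IZR_INZ, Z2Nat.id; [reflexivity | lia]).
  split; [| lra].
  rewrite <- Rpower_pow, HN by lra.
  replace (/ eps) with (Rpower 2 z).
  - apply Rle_Rpower; lra.
  - unfold Rpower, z. replace (L / ln 2 * ln 2) with L by (field; lra).
    apply exp_ln, Rinv_0_lt_compat; lra.
Qed.

Lemma depth_budget eps N : 0 < eps <= 1 / 2 -> INR N <= 2 * ln (/ eps) + 1 ->
  INR (3 * (N + 7) + 3) <= 120 * ln (/ eps) ^ 2.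
Proof.
  intros He HN. assert (HL := ln_inv_ge_ln2 eps He). assert (Hln2 := ln_lt_2).
  rewrite plus_INR, mult_INR, plus_INR. simpl. nra.
Qed.

(* 4 PI H <= 4 PI^2 <= 2^7 / 2 bounds the bisection term by 1 / (2 2^N) <= eps / 2; the hat
   term is exactly eps / 2. *)
Lemma error_budget eps N H : 0 < eps -> / eps <= 2 ^ N -> 0 < H <= PI ->
  4 * PI * (H / 2 ^ (N + 7)) + 2 ^ S (N + 7) * (16 / (32 * 2 ^ S (N + 7) / eps)) <= eps.
Proof.
  intros He HN HH. assert (HPI := PI_4).
  assert (HpN : 0 < 2 ^ N) by (apply pow_lt; lra).
  assert (Hinv : / 2 ^ N <= eps).
  { apply Rmult_le_reg_r with (2 ^ N); [exact HpN |].
    rewrite Rinv_l by lra. assert (eps * / eps = 1) by (field; lra). nra. }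
  assert (Hinv0 : 0 < / 2 ^ N) by (apply Rinv_0_lt_compat, HpN).
  assert (E : 2 ^ (N + 7) = 2 ^ N * 128) by (rewrite pow_add; simpl; ring).
  simpl (2 ^ S _). rewrite E.
  replace (2 * (2 ^ N * 128) * (16 / (32 * (2 * (2 ^ N * 128)) / eps))) with (eps / 2)
    by (field; lra).
  replace (4 * PI * (H / (2 ^ N * 128))) with (PI * H / 32 * / 2 ^ N) by (field; lra).
  assert (PI * H / 32 * / 2 ^ N <= 1 / 2 * / 2 ^ N) by (apply Rmult_le_compat_r; nra).
  lra.
Qed.

Theorem mainTheorem18 (t : R) (ht : 1 < t) :
  exists C : R, 0 < C /\
    forall eps : R, 0 < eps <= 1 / 2 ->
      exists net : list affine,
        wf_net 1 net /\
        INR (depth net) <= C * (ln (/ eps)) ^ 2 /\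
        INR (width net) <= C /\
        ex_RInt (fun x => Rabs (realize net x - U t x)) (- 2 * PI) (2 * PI) /\
        RInt (fun x => Rabs (realize net x - U t x)) (- 2 * PI) (2 * PI) <= eps.
Proof.
  exists 120. split; [lra |]. intros eps He.
  destruct (pow2_ge_inv eps He) as [N [HN HNln]].
  set (n := (N + 7)%nat). set (K := 32 * 2 ^ S n / eps).
  assert (0 < 2 ^ S n) by (apply pow_lt; lra).
  assert (HK : 0 < K) by (apply Rdiv_lt_0_compat; lra).
  exists (bisection_net K t (half_width t) n).
  split; [| split; [| split; [| split]]].
  - apply wf_bisection_net.
  - rewrite depth_bisection_net. apply depth_budget; assumption.
  - assert (Hw := le_INR _ _ (width_bisection_net K t (half_width t) n)). simpl in Hw. lra.
  - apply ex_RInt_bisection_error; assumption.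
  - eapply Rle_trans; [apply RInt_bisection_error_le; assumption |].
    apply error_budget; [lra | exact HN |].
    split; [apply half_width_pos, ht | unfold half_width; destruct (x_t_spec t ht); lra].
Qed.
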